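(* For all $q,p\in\mathbb{C}^\times$ and $n\ge1$, the operator $R=R_n(q,p)$ satisfies the Yang–Baxter equation $R_{12}R_{13}R_{23}=R_{23}R_{13}R_{12}$, and the operator $\check R=pRP$ satisfies the Hecke equation $(\check R-q)(\check R+q^{-1})=0$.
   Context: $V=\mathbb{C}^n$ with basis $e_1,\dots,e_n$; $P$ is the flip on $V\otimes V$; operators are written $R(e_i\otimes e_j)=\sum_{k,l}R_{ij}^{kl}e_k\otimes e_l$. For $q,p\in\mathbb{C}^\times$, the two-parameter Cremmer–Gervais matrix $R=R_n(q,p)$ has entries (for $1\le i,j,k,l\le n$): $pR_{ij}^{kl}=qp^{2(l-i)}$ if $i=k\ge j=l$; $pR_{ij}^{kl}=q^{-1}p^{2(l-i)}$ if $i=k<j=l$; $pR_{ij}^{kl}=(q-q^{-1})p^{2(l-i)}$ if $j\le k<i$ and $i+j=k+l$; $pR_{ij}^{kl}=(q^{-1}-q)p^{2(l-i)}$ if $i<k<j$ and $i+j=k+l$; and $R_{ij}^{kl}=0$ otherwise. (For $q=p^n$ this is the $R$-matrix of Cremmer and Gervais.) *)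

From HB Require Import structures.
From mathcomp Require Import all_boot all_order all_algebra.
From mathcomp Require Import complex.
From mathcomp Require Import Rstruct.
Set Implicit Arguments. Unset Strict Implicit. Unset Printing Implicit Defensive.
Import Order.TTheory GRing.Theory Num.Theory.
Local Open Scope ring_scope.

Definition CC : Type := (Rdefinitions.R)[i].

(* Operators on V (x) V, V = C^n, given by their coefficients:
   A i j k l = A_{ij}^{kl}, i.e. A (e_i (x) e_j) = sum_{k,l} A_{ij}^{kl} e_k (x) e_l.
   Indices 1..n of the paper are 'I_n (0..n-1); all conditions below are
   invariant under the common shift. *)
Definition op2 (n : nat) := 'I_n -> 'I_n -> 'I_n -> 'I_n -> CC.
(* Operators on V (x) V (x) V: T a b c a' b' c' = coefficient of
   e_a' (x) e_b' (x) e_c' in T (e_a (x) e_b (x) e_c). *)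
Definition op3 (n : nat) :=
  'I_n -> 'I_n -> 'I_n -> 'I_n -> 'I_n -> 'I_n -> CC.

Definition comp2 n (A B : op2 n) : op2 n :=
  fun i j k l => \sum_(a < n) \sum_(b < n) B i j a b * A a b k l.
Definition comp3 n (A B : op3 n) : op3 n :=
  fun a b c a' b' c' =>
    \sum_(x < n) \sum_(y < n) \sum_(z < n) B a b c x y z * A x y z a' b' c'.

Definition id2 n : op2 n := fun i j k l => ((i == k) && (j == l))%:R.
Definition flip n : op2 n := fun i j k l => ((k == j) && (l == i))%:R.
Definition add2 n (A B : op2 n) : op2 n := fun i j k l => A i j k l + B i j k l.
Definition scale2 n (c : CC) (A : op2 n) : op2 n := fun i j k l => c * A i j k l.

Definition leg12 n (R : op2 n) : op3 n :=
  fun a b c a' b' c' => R a b a' b' * (c == c')%:R.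
Definition leg13 n (R : op2 n) : op3 n :=
  fun a b c a' b' c' => R a c a' c' * (b == b')%:R.
Definition leg23 n (R : op2 n) : op3 n :=
  fun a b c a' b' c' => R b c b' c' * (a == a')%:R.

Definition CG_R n (q p : CC) : op2 n := fun i j k l =>
  p^-1 * (p ^ (2 * ((l : nat)%:Z - (i : nat)%:Z)) *
    (if (i == k) && (j == l) then (if (j <= i)%N then q else q^-1)
     else if (i + j == k + l)%N then
       (if (j <= k)%N && (k < i)%N then q - q^-1
        else if (i < k)%N && (k < j)%N then q^-1 - q else 0)
     else 0)).

Definition CG_Rcheck n (q p : CC) : op2 n :=
  scale2 p (comp2 (CG_R q p) (@flip n)).

(* Identify V (x) V with polynomial functions of degree < n in each variable via
   e_a (x) e_b |-> x^a y^b, and likewise V (x) V (x) V.  Summing the geometric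
   series hidden in the entries of R = R_n(q,p) shows that R acts on polynomials as
   the q-difference operator
     (R f)(x, y) = p^-1 (q f(x/p^2, p^2 y)
                         + (q - q^-1) y / (x/p^2 - y) (f(x/p^2, p^2 y) - f(y, x))),
   and pRP as f |-> p R(f o swap).  On arbitrary functions, the braid relation
   R12 R13 R23 = R23 R13 R12 and the relation (pRP - q)(pRP + q^-1) = 0 for these
   operators are identities between rational functions, valid off the lines
   x = p^2 y, y = p^2 z, x = p^4 z.  A polynomial of degree < n in each variable that
   vanishes off finitely many values of each variable is zero, so both relations
   hold for the matrices. *)

From mathcomp Require Import all_boot all_order all_algebra.
From mathcomp Require Import complex Rstruct ring zify.
Import GRing.Theory Num.Theory.
Set Implicit Arguments. Unset Strict Implicit. Unset Printing Implicit Defensive.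
Local Open Scope ring_scope.

Section Sums.
Variable R : comNzRingType.

Lemma sum_delta (I : finType) (i : I) (F : I -> R) : \sum_j F j * (j == i)%:R = F i.
Proof.
rewrite (bigD1 i) //= eqxx mulr1 big1 ?addr0 // => j /negbTE->.
exact: mulr0.
Qed.

Lemma triple_bigA (I J K : finType) (F : I -> J -> K -> R) :
  \sum_i \sum_j \sum_k F i j k = \sum_(t : I * (J * K)) F t.1 t.2.1 t.2.2.
Proof. by under eq_bigr do rewrite pair_bigA; rewrite pair_bigA. Qed.

Lemma sum_ord_indicator n a b (F : nat -> R) : (b <= n)%N ->
  \sum_(k < n) (a <= k < b)%N%:R * F k = \sum_(a <= k < b) F k.
Proof.
move=> le_bn; rewrite big_geq_mkord (big_ord_widen_cond n) // [RHS]big_mkcond.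
by apply: eq_bigr => k _; case: (_ && _); rewrite (mul1r, mul0r).
Qed.

Lemma sum_ord_eq_sub n (F : nat -> R) (k s : nat) :
  \sum_(l < n) (k + l == s)%N%:R * F l = ((k <= s) && (s - k < n))%N%:R * F (s - k)%N.
Proof.
case: (boolP ((k <= s) && (s - k < n))%N) => [/andP[le_ks lt_skn] | out].
  rewrite mul1r (bigD1 (Ordinal lt_skn)) //= subnKC // eqxx mul1r big1 ?addr0 //.
  move=> l; rewrite -(inj_eq val_inj) /= => neq_l.
  have -> : (k + l == s)%N = false by lia.
  by rewrite mul0r.
rewrite mul0r big1 // => l _.
have lt_ln := ltn_ord l; have -> : (k + l == s)%N = false by lia.
by rewrite mul0r.
Qed.

Lemma telescope_geom (X Y : R) i j :
  (X - Y) * (\sum_(j <= k < i) X ^+ k * Y ^+ (i + j - k)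
             - \sum_(i <= k < j) X ^+ k * Y ^+ (i + j - k))
  = X ^+ i * Y ^+ j.+1 - X ^+ j * Y ^+ i.+1.
Proof.
have tel a b : (a <= b <= (i + j).+1)%N ->
    (X - Y) * \sum_(a <= k < b) X ^+ k * Y ^+ (i + j - k)
    = X ^+ b * Y ^+ ((i + j).+1 - b) - X ^+ a * Y ^+ ((i + j).+1 - a).
  move=> /andP[le_ab le_bs]; rewrite mulr_sumr.
  apply: (telescope_sumr_eq (fun k => X ^+ k * Y ^+ ((i + j).+1 - k))) => // k lt_kb.
  have -> : ((i + j).+1 - k = (i + j - k).+1)%N by lia.
  have -> : ((i + j).+1 - k.+1 = i + j - k)%N by lia.
  by rewrite !exprS; ring.
have Ei : ((i + j).+1 - i = j.+1)%N by lia.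
have Ej : ((i + j).+1 - j = i.+1)%N by lia.
have [le_ji | lt_ij] := leqP j i.
  by rewrite [\sum_(i <= k < j) _]big_geq // subr0 tel ?Ei ?Ej //; lia.
rewrite [\sum_(j <= k < i) _]big_geq ?sub0r ?mulrN ?tel ?Ei ?Ej ?opprB //; lia.
Qed.

End Sums.

Section TensorPolynomials.
Variables (R : comNzRingType) (n : nat).

Definition pol1 (c : 'I_n -> R) (x : R) : R := \sum_(a < n) c a * x ^+ a.
Definition pol2 (w : 'I_n -> 'I_n -> R) (x y : R) : R :=
  pol1 (fun a => pol1 (w a) y) x.
Definition pol3 (w : 'I_n -> 'I_n -> 'I_n -> R) (x y z : R) : R :=
  pol1 (fun a => pol2 (w a) y z) x.

Definition apply2 (A : 'I_n -> 'I_n -> 'I_n -> 'I_n -> R) (w : 'I_n -> 'I_n -> R) :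
    'I_n -> 'I_n -> R :=
  fun k l => \sum_(a < n) \sum_(b < n) w a b * A a b k l.
Definition apply3 (T : 'I_n -> 'I_n -> 'I_n -> 'I_n -> 'I_n -> 'I_n -> R)
    (w : 'I_n -> 'I_n -> 'I_n -> R) : 'I_n -> 'I_n -> 'I_n -> R :=
  fun k l m => \sum_(a < n) \sum_(b < n) \sum_(c < n) w a b c * T a b c k l m.

Lemma pol1_ext (c c' : 'I_n -> R) x : c =1 c' -> pol1 c x = pol1 c' x.
Proof. by move=> eq_c; apply: eq_bigr => a _; rewrite eq_c. Qed.

Lemma pol2_ext (w w' : 'I_n -> 'I_n -> R) x y :
  (forall a b, w a b = w' a b) -> pol2 w x y = pol2 w' x y.
Proof. by move=> eq_w; apply: pol1_ext => a; apply: pol1_ext => b. Qed.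

Lemma pol3_ext (w w' : 'I_n -> 'I_n -> 'I_n -> R) x y z :
  (forall a b c, w a b c = w' a b c) -> pol3 w x y z = pol3 w' x y z.
Proof. by move=> eq_w; apply: pol1_ext => a; apply: pol2_ext. Qed.

Lemma pol1_sub (c c' : 'I_n -> R) x : pol1 (fun a => c a - c' a) x = pol1 c x - pol1 c' x.
Proof. by rewrite /pol1 -sumrB; apply: eq_bigr => a _; rewrite mulrBl. Qed.

Lemma pol3_sub (w w' : 'I_n -> 'I_n -> 'I_n -> R) x y z :
  pol3 (fun a b c => w a b c - w' a b c) x y z = pol3 w x y z - pol3 w' x y z.
Proof.
rewrite /pol3 -pol1_sub; apply: pol1_ext => a.
by rewrite /pol2 -pol1_sub; apply: pol1_ext => b; rewrite pol1_sub.
Qed.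

Lemma pol2_pair (w : 'I_n -> 'I_n -> R) x y :
  pol2 w x y = \sum_(t : 'I_n * 'I_n) x ^+ t.1 * y ^+ t.2 * w t.1 t.2.
Proof.
rewrite -(pair_bigA _ (fun a b : 'I_n => x ^+ a * y ^+ b * w a b)); apply: eq_bigr => a _.
by rewrite mulr_suml; apply: eq_bigr => b _; ring.
Qed.

Lemma pol2_addZ (u v : 'I_n -> 'I_n -> R) c x y :
  pol2 (fun a b => u a b + c * v a b) x y = pol2 u x y + c * pol2 v x y.
Proof.
rewrite !pol2_pair mulr_sumr -big_split.
by apply: eq_bigr => t _ /=; ring.
Qed.

Lemma pol2Z (w : 'I_n -> 'I_n -> R) c x y :
  pol2 (fun a b => c * w a b) x y = c * pol2 w x y.
Proof. by rewrite !pol2_pair mulr_sumr; apply: eq_bigr => t _ /=; ring. Qed.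

Lemma pol2_swap (w : 'I_n -> 'I_n -> R) x y :
  pol2 (fun a b => w b a) x y = pol2 w y x.
Proof.
rewrite !pol2_pair (reindex (fun t => (t.2, t.1))) /=; last first.
  by exists (fun t => (t.2, t.1)) => -[].
by apply: eq_bigr => t _ /=; ring.
Qed.

Lemma pol3_swap12 (w : 'I_n -> 'I_n -> 'I_n -> R) x y z :
  pol3 (fun a b c => w b a c) x y z = pol3 w y x z.
Proof. exact: (pol2_swap (fun a b => pol1 (w a b) z)). Qed.

Lemma pol3_swap23 (w : 'I_n -> 'I_n -> 'I_n -> R) x y z :
  pol3 (fun a b c => w a c b) x y z = pol3 w x z y.
Proof. by apply: pol1_ext => a; apply: pol2_swap. Qed.

Lemma pol3_lastE (w : 'I_n -> 'I_n -> 'I_n -> R) x y z :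
  pol3 w x y z = pol1 (fun c => pol2 (fun a b => w a b c) x y) z.
Proof. by rewrite -[RHS]pol3_swap12 -pol3_swap23. Qed.

Lemma pol3_midE (w : 'I_n -> 'I_n -> 'I_n -> R) x y z :
  pol3 w x y z = pol1 (fun b => pol2 (fun a c => w a b c) x z) y.
Proof. by rewrite -[RHS]pol3_swap12. Qed.

Lemma pol2_apply2 A (w : 'I_n -> 'I_n -> R) x y :
  pol2 (apply2 A w) x y = \sum_(t : 'I_n * 'I_n) pol2 (A t.1 t.2) x y * w t.1 t.2.
Proof.
rewrite pol2_pair; under eq_bigr do rewrite /apply2 pair_bigA mulr_sumr.
rewrite exchange_big; apply: eq_bigr => t _.
by rewrite pol2_pair mulr_suml; apply: eq_bigr => u _; ring.
Qed.

End TensorPolynomials.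

Section Vanishing.
Variables (R : numDomainType) (n : nat).

Lemma pol1_eq0 (c : 'I_n -> R) (B : seq R) :
  (forall x, x \notin B -> pol1 c x = 0) -> forall a, c a = 0.
Proof.
move=> c0 a.
pose f := \poly_(i < n) (if insub i is Some b then c b else 0).
have fE x : f.[x] = pol1 c x.
  by rewrite horner_poly; apply: eq_bigr => b _; rewrite valK.
(* The first [n + size B] naturals, minus [B], give [n] distinct roots of [f]. *)
pose s := [seq m%:R | m <- iota 0 (n + size B)] : seq R.
have uniq_s : uniq s.
  rewrite map_inj_uniq ?iota_uniq // => m1 m2 /eqP.
  by rewrite eqr_nat => /eqP.
pose rs := filter (predC (mem B)) s.
have uniq_rs : uniq rs by rewrite filter_uniq.
have size_rs : (n <= size rs)%N.
  have : (count (mem B) s <= size B)%N.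
    rewrite -size_filter; apply: uniq_leq_size => [|r]; first exact: filter_uniq.
    by rewrite mem_filter => /andP[].
  have := count_predC (mem B) s.
  by rewrite /rs size_filter size_map size_iota; lia.
have f0 : f = 0.
  apply: (roots_geq_poly_eq0 _ uniq_rs); last exact: leq_trans (size_poly _ _) size_rs.
  by apply/allP => r; rewrite mem_filter => /andP[r_B _]; rewrite /root fE c0.
have := coef_poly n (fun i => if insub i is Some b then c b else 0) a.
by rewrite -/f f0 coef0 ltn_ord valK.
Qed.

Lemma pol2_eq0 (w : 'I_n -> 'I_n -> R) (B : R -> seq R) :
  (forall y x, x \notin B y -> pol2 w x y = 0) -> forall a b, w a b = 0.
Proof.
move=> w0 a; apply: (pol1_eq0 (B := [::])) => y _.
exact: (pol1_eq0 (w0 y)).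
Qed.

Lemma pol3_eq0 (w : 'I_n -> 'I_n -> 'I_n -> R) (B2 : R -> seq R) (B1 : R -> R -> seq R) :
  (forall z y x, y \notin B2 z -> x \notin B1 y z -> pol3 w x y z = 0) ->
  forall a b c, w a b c = 0.
Proof.
move=> w0 a; apply: (pol2_eq0 (B := B2)) => z y y_B2.
apply: (pol1_eq0 (c := fun a => pol2 (w a) y z) (B := B1 y z)) => x x_B1.
exact: w0.
Qed.

End Vanishing.

Section Legs.
Variable F : Type.

Definition fleg12 (T : (F -> F -> F) -> F -> F -> F) (f : F -> F -> F -> F) x y z : F :=
  T (fun u v => f u v z) x y.
Definition fleg13 (T : (F -> F -> F) -> F -> F -> F) (f : F -> F -> F -> F) x y z : F :=
  T (fun u v => f u y v) x z.
Definition fleg23 (T : (F -> F -> F) -> F -> F -> F) (f : F -> F -> F -> F) x y z : F :=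
  T (fun u v => f x u v) y z.

End Legs.

Section CremmerGervaisOperator.
Variables (F : fieldType) (q p : F).
Hypotheses (q_neq0 : q != 0) (p_neq0 : p != 0).
Local Notation P := (p ^+ 2).

Definition cg_op (f : F -> F -> F) (x y : F) : F :=
  p^-1 * (q * f (x / P) (P * y)
          + (q - q^-1) * y / (x / P - y) * (f (x / P) (P * y) - f y x)).

Definition cg_check (f : F -> F -> F) (x y : F) : F := p * cg_op (fun u v => f v u) x y.

Lemma cg_op_eq f g x y : f (x / P) (P * y) = g (x / P) (P * y) -> f y x = g y x ->
  cg_op f x y = cg_op g x y.
Proof. by rewrite /cg_op => -> ->. Qed.

Lemma cg_check_eq f g x y : f (P * y) (x / P) = g (P * y) (x / P) -> f x y = g x y ->
  cg_check f x y = cg_check g x y.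
Proof. by move=> eq1 eq2; rewrite /cg_check; congr (_ * _); apply: cg_op_eq. Qed.

Lemma cg_op_sum (I : Type) (r : seq I) (g : I -> F -> F -> F) (c : I -> F) x y :
  cg_op (fun u v => \sum_(i <- r) g i u v * c i) x y = \sum_(i <- r) cg_op (g i) x y * c i.
Proof.
rewrite /cg_op -sumrB !mulr_sumr -big_split mulr_sumr.
by apply: eq_bigr => i _ /=; ring.
Qed.

Let P_neq0 : P != 0. Proof. exact: expf_neq0. Qed.
Let mulPK y : P * y / P = y. Proof. by rewrite mulrC mulKf. Qed.
Let divPK x : P * (x / P) = x. Proof. by rewrite mulrC divfK. Qed.

Lemma cg_op_braid f x y z : x != P * y -> y != P * z -> x != P * (P * z) ->
  fleg12 cg_op (fleg13 cg_op (fleg23 cg_op f)) x y z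
  = fleg23 cg_op (fleg13 cg_op (fleg12 cg_op f)) x y z.
Proof.
move=> xy yz xz.
have yz' : y != z * P by rewrite mulrC.
have xy' : x != y * P by rewrite mulrC.
rewrite /fleg12 /fleg13 /fleg23 /cg_op !mulPK !divPK.
(* Only finitely many values of [f] occur; as indeterminates they make this a rational identity. *)
repeat match goal with |- context [f ?a ?b ?c] => move: (f a b c) => ? end.
field.
rewrite q_neq0 p_neq0 !(mulNr, subr_eq0) yz' xy' ![_ * P == _]eq_sym yz' xy' /= andbT.
by move: xz; apply: contra_neq => ->; ring.
Qed.

Lemma cg_check_hecke f x y : x != P * y ->
  cg_check (fun u v => cg_check f u v + q^-1 * f u v) x y
  = q * (cg_check f x y + q^-1 * f x y).
Proof.
move=> xy; have xy' : x != y * P by rewrite mulrC.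
rewrite /cg_check /cg_op !mulPK !divPK.
repeat match goal with |- context [f ?a ?b] => move: (f a b) => ? end.
field.
by rewrite q_neq0 p_neq0 !(mulNr, subr_eq0) xy' eq_sym xy'.
Qed.

End CremmerGervaisOperator.

Section CremmerGervaisCoefficients.
Variables (F : fieldType) (q : F).

Definition cg_weight (i j k : nat) : F :=
  (k == i)%N%:R * q + (q - q^-1) * ((j <= k < i)%N%:R - (i <= k < j)%N%:R).

Definition cg_coef (i j k l : nat) : F := (k + l == i + j)%N%:R * cg_weight i j k.

Lemma pol2_cg_coef n (i j : 'I_n) (X Y : F) :
  (X - Y) * pol2 (fun k l : 'I_n => cg_coef i j k l) X Y
  = q * (X - Y) * X ^+ i * Y ^+ j + (q - q^-1) * (X ^+ i * Y ^+ j.+1 - X ^+ j * Y ^+ i.+1).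
Proof.
have [lt_in lt_jn] := (ltn_ord i, ltn_ord j).
pose g k := X ^+ k * Y ^+ (i + j - k).
have row k : pol1 (fun l : 'I_n => cg_coef i j k l) Y = cg_weight i j k * Y ^+ (i + j - k).
  rewrite /pol1; under eq_bigr do rewrite /cg_coef -mulrA.
  rewrite (sum_ord_eq_sub _ (fun l => cg_weight i j k * Y ^+ l)).
  case: (boolP ((k <= i + j) && (i + j - k < n))%N) => [_ | out]; first by rewrite mul1r.
  rewrite /cg_weight mul0r.
  have -> : (k == i)%N = false by lia.
  have -> : (j <= k < i)%N = false by lia.
  have -> : (i <= k < j)%N = false by lia.
  by rewrite mul0r subrr mulr0 addr0 mul0r.
have -> : pol2 (fun k l : 'I_n => cg_coef i j k l) X Y
    = q * g i + (q - q^-1) * (\sum_(j <= k < i) g k - \sum_(i <= k < j) g k).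
  rewrite -(sum_delta i (fun k : 'I_n => q * g k)) -!(@sum_ord_indicator _ n) 1?ltnW //.
  rewrite /pol2 {1}/pol1 -sumrB mulr_sumr -big_split; apply: eq_bigr => k _ /=.
  rewrite row /cg_weight /g -[(k : nat) == i]/(k == i); ring.
rewrite /g mulrDr [(X - Y) * ((q - q^-1) * _)]mulrCA telescope_geom.
have -> : (i + j - i = j)%N by lia.
ring.
Qed.

End CremmerGervaisCoefficients.

Definition id3 n : op3 n :=
  fun a b c a' b' c' => [&& a == a', b == b' & c == c']%:R.

Section Operators.
Variable n : nat.
Implicit Types (A B : op2 n) (S T : op3 n).

Lemma apply2_comp A B w k l : apply2 (comp2 A B) w k l = apply2 A (apply2 B w) k l.
Proof.
rewrite /apply2 /comp2 !pair_bigA /=; under eq_bigr do rewrite pair_bigA mulr_sumr.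
rewrite exchange_big; apply: eq_bigr => t _.
by rewrite pair_bigA mulr_suml; apply: eq_bigr => u _ /=; rewrite mulrA.
Qed.

Lemma apply3_comp S T w a b c :
  apply3 (comp3 S T) w a b c = apply3 S (apply3 T w) a b c.
Proof.
rewrite /apply3 /comp3 !triple_bigA; under eq_bigr do rewrite triple_bigA mulr_sumr.
rewrite exchange_big; apply: eq_bigr => t _.
by rewrite triple_bigA mulr_suml; apply: eq_bigr => u _ /=; rewrite mulrA.
Qed.

Lemma apply2_basis A i j k l : apply2 A (@id2 n i j) k l = A i j k l.
Proof.
rewrite /apply2 -(sum_delta i (fun a => A a j k l)); apply: eq_bigr => a _.
rewrite -(sum_delta j (fun b => A a b k l * (a == i)%:R)); apply: eq_bigr => b _.
by rewrite /id2 eq_sym [j == _]eq_sym -mulnb natrM; ring.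
Qed.

Lemma apply3_basis T a b c a' b' c' : apply3 T (@id3 n a b c) a' b' c' = T a b c a' b' c'.
Proof.
rewrite /apply3 -(sum_delta a (fun x => T x b c a' b' c')); apply: eq_bigr => x _.
rewrite -(sum_delta b (fun y => T x y c a' b' c' * (x == a)%:R)); apply: eq_bigr => y _.
rewrite -(sum_delta c (fun z => T x y z a' b' c' * (x == a)%:R * (y == b)%:R)).
apply: eq_bigr => z _.
by rewrite /id3 eq_sym [b == _]eq_sym [c == _]eq_sym -!mulnb !natrM; ring.
Qed.

Lemma apply2_id2 w k l : apply2 (@id2 n) w k l = w k l.
Proof.
rewrite /apply2 -(sum_delta k (fun a => w a l)); apply: eq_bigr => a _.
rewrite -(sum_delta l (fun b => w a b * (a == k)%:R)); apply: eq_bigr => b _.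
by rewrite /id2 -mulnb natrM; ring.
Qed.

Lemma apply2_addZ A B (c : CC) w k l :
  apply2 (add2 A (scale2 c B)) w k l = apply2 A w k l + c * apply2 B w k l.
Proof.
rewrite /apply2 mulr_sumr -big_split; apply: eq_bigr => a _ /=.
by rewrite mulr_sumr -big_split; apply: eq_bigr => b _ /=; rewrite /add2 /scale2; ring.
Qed.

Lemma apply2_scale2 (c : CC) A w k l : apply2 (scale2 c A) w k l = c * apply2 A w k l.
Proof.
rewrite /apply2 mulr_sumr; apply: eq_bigr => a _.
by rewrite mulr_sumr; apply: eq_bigr => b _; rewrite /scale2 mulrCA.
Qed.

Lemma apply2_flip w k l : apply2 (@flip n) w k l = w l k.
Proof.
rewrite /apply2 -(sum_delta l (fun a => w a k)); apply: eq_bigr => a _.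
rewrite -(sum_delta k (fun b => w a b * (a == l)%:R)); apply: eq_bigr => b _.
by rewrite /flip eq_sym [l == _]eq_sym -mulnb natrM; ring.
Qed.

Lemma apply3_leg12 A w a b c :
  apply3 (leg12 A) w a b c = apply2 A (fun x y => w x y c) a b.
Proof.
apply: eq_bigr => x _; apply: eq_bigr => y _.
by rewrite -(sum_delta c (fun z => w x y z * A x y a b)); apply: eq_bigr => z _; rewrite mulrA.
Qed.

Lemma apply3_leg13 A w a b c :
  apply3 (leg13 A) w a b c = apply2 A (fun x z => w x b z) a c.
Proof.
apply: eq_bigr => x _.
rewrite -(sum_delta b (fun y => \sum_(z < n) w x y z * A x z a c)); apply: eq_bigr => y _.
by rewrite mulr_suml; apply: eq_bigr => z _; rewrite mulrA.
Qed.

Lemma apply3_leg23 A w a b c : apply3 (leg23 A) w a b c = apply2 A (w a) b c.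
Proof.
rewrite -(sum_delta a (fun x => apply2 A (w x) b c)); apply: eq_bigr => x _.
rewrite mulr_suml; apply: eq_bigr => y _.
by rewrite mulr_suml; apply: eq_bigr => z _; rewrite mulrA.
Qed.

Lemma pol2_apply2_comp A B w x y :
  pol2 (apply2 (comp2 A B) w) x y = pol2 (apply2 A (apply2 B w)) x y.
Proof. exact/pol2_ext/apply2_comp. Qed.

Lemma pol3_apply3_comp S T w x y z :
  pol3 (apply3 (comp3 S T) w) x y z = pol3 (apply3 S (apply3 T w)) x y z.
Proof. exact/pol3_ext/apply3_comp. Qed.

Lemma pol2_apply2_addZid2 A (c : CC) w x y :
  pol2 (apply2 (add2 A (scale2 c (@id2 n))) w) x y = pol2 (apply2 A w) x y + c * pol2 w x y.
Proof.
by rewrite -pol2_addZ; apply: pol2_ext => k l; rewrite apply2_addZ apply2_id2.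
Qed.

Lemma pol3_leg12 A w x y z :
  pol3 (apply3 (leg12 A) w) x y z = pol1 (fun c => pol2 (apply2 A (fun a b => w a b c)) x y) z.
Proof. by rewrite pol3_lastE; apply: pol1_ext => c; apply: pol2_ext => a b; apply: apply3_leg12. Qed.

Lemma pol3_leg13 A w x y z :
  pol3 (apply3 (leg13 A) w) x y z = pol1 (fun b => pol2 (apply2 A (fun a c => w a b c)) x z) y.
Proof. by rewrite pol3_midE; apply: pol1_ext => b; apply: pol2_ext => a c; apply: apply3_leg13. Qed.

Lemma pol3_leg23 A w x y z :
  pol3 (apply3 (leg23 A) w) x y z = pol1 (fun a => pol2 (apply2 A (w a)) y z) x.
Proof. by apply: pol1_ext => a; apply: pol2_ext => b c; apply: apply3_leg23. Qed.

Lemma op2_eq0_from_pol2 (T : op2 n) (B : CC -> seq CC) :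
  (forall w y x, x \notin B y -> pol2 (apply2 T w) x y = 0) -> forall i j k l, T i j k l = 0.
Proof.
move=> T0 i j; apply: (pol2_eq0 (B := B)) => y x xB.
by rewrite -(pol2_ext _ _ (apply2_basis T i j)) T0.
Qed.

Lemma op3_eq_from_pol3 (S T : op3 n) (B2 : CC -> seq CC) (B1 : CC -> CC -> seq CC) :
  (forall w z y x, y \notin B2 z -> x \notin B1 y z ->
     pol3 (apply3 S w) x y z = pol3 (apply3 T w) x y z) ->
  forall a b c a' b' c', S a b c a' b' c' = T a b c a' b' c'.
Proof.
move=> ST a b c a' b' c'; apply/eqP; rewrite -subr_eq0; apply/eqP; move: a' b' c'.
apply: (pol3_eq0 (B2 := B2) (B1 := B1)) => z y x yB xB.
by rewrite pol3_sub -!(pol3_ext _ _ _ (apply3_basis _ a b c)) ST ?subrr.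
Qed.

End Operators.

Section CremmerGervaisMatrix.
Variables (n : nat) (q p : CC).
Hypotheses (q_neq0 : q != 0) (p_neq0 : p != 0).
Local Notation P := (p ^+ 2).
Local Notation R := (CG_R q p).
Local Notation cg := (cg_op q p).

Let P_neq0 : P != 0. Proof. exact: expf_neq0. Qed.
Let divPK x : P * (x / P) = x. Proof. by rewrite mulrC divfK. Qed.
Let neq_divP u v : (u / P != v) = (u != P * v).
Proof. by rewrite -(inj_eq (mulfI P_neq0)) divPK. Qed.

Lemma CG_RE (i j k l : 'I_n) : R i j k l = p^-1 * (P ^+ l / P ^+ i) * cg_coef q i j k l.
Proof.
rewrite /CG_R; have -> : p ^ (2 * ((l : nat)%:Z - (i : nat)%:Z)) = P ^+ l / P ^+ i.
  by rewrite mulrBr -!PoszM expfzDr // -exprnN -!exprM.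
rewrite -mulrA; congr (_ * (_ * _)).
rewrite /cg_coef /cg_weight.
have [kl | kl] := eqVneq (k + l)%N (i + j)%N; last first.
  case: ifP => [/andP[/eqP ik /eqP jl] | _]; last by rewrite mul0r.
  by move: kl; rewrite ik jl eqxx.
rewrite mul1r -[i == k]/((i : nat) == k) -[j == l]/((j : nat) == l).
have [ki | ki] := eqVneq (k : nat) i.
  have -> : (j : nat) == l by lia.
  have -> : (j <= k < i)%N = false by lia.
  case: (leqP j i) => ji.
    have -> : (i <= k < j)%N = false by lia.
    by rewrite /=; ring.
  have -> : (i <= k < j)%N by lia.
  by rewrite /=; ring.
have [jki | jki] := boolP (j <= k < i)%N.
  have -> : (i <= k < j)%N = false by lia.
  by rewrite /=; ring.
have -> : (i <= k < j)%N = (i < k < j)%N by lia.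
by case: (i < k < j)%N; rewrite /=; ring.
Qed.

Lemma pol2_CG_R (i j : 'I_n) x y : x != P * y ->
  pol2 (R i j) x y = cg (fun u v => u ^+ i * v ^+ j) x y.
Proof.
move=> xy.
have -> : pol2 (R i j) x y
    = p^-1 / P ^+ i * pol2 (fun k l : 'I_n => cg_coef q i j k l) x (P * y).
  rewrite mulr_sumr; apply: eq_bigr => k _; rewrite mulrA; congr (_ * _).
  by rewrite mulr_sumr; apply: eq_bigr => l _; rewrite CG_RE [(P * y) ^+ _]exprMn; ring.
have xPy : x - P * y != 0 by rewrite subr_eq0.
rewrite -[pol2 _ x _](mulKf xPy) pol2_cg_coef /cg_op expr_div_n ![(P * _) ^+ _]exprMn.
(* Generalise [P] so that [exprS] does not unfold [p ^+ 2]. *)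
move: P_neq0 xPy; move: P => P' P'_neq0 xPy.
rewrite !exprS; field.
by rewrite expf_neq0 // P'_neq0 q_neq0 p_neq0 mulNr [y * _]mulrC xPy.
Qed.

Lemma pol2_apply2_CG_R (w : 'I_n -> 'I_n -> CC) x y : x != P * y ->
  pol2 (apply2 R w) x y = cg (pol2 w) x y.
Proof.
move=> xy.
transitivity (cg (fun u v => \sum_(t : 'I_n * 'I_n) u ^+ t.1 * v ^+ t.2 * w t.1 t.2) x y).
  by rewrite pol2_apply2 cg_op_sum; apply: eq_bigr => t _; rewrite pol2_CG_R.
by apply: cg_op_eq; rewrite pol2_pair.
Qed.

Lemma pol3_leg12_CG_R (w : 'I_n -> 'I_n -> 'I_n -> CC) x y z : x != P * y ->
  pol3 (apply3 (leg12 R) w) x y z = fleg12 cg (pol3 w) x y z.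
Proof.
move=> xy; rewrite pol3_leg12 (pol1_ext _ (fun c => pol2_apply2_CG_R _ xy)) /pol1 -cg_op_sum.
by apply: cg_op_eq; rewrite pol3_lastE.
Qed.

Lemma pol3_leg13_CG_R (w : 'I_n -> 'I_n -> 'I_n -> CC) x y z : x != P * z ->
  pol3 (apply3 (leg13 R) w) x y z = fleg13 cg (pol3 w) x y z.
Proof.
move=> xz; rewrite pol3_leg13 (pol1_ext _ (fun b => pol2_apply2_CG_R _ xz)) /pol1 -cg_op_sum.
by apply: cg_op_eq; rewrite pol3_midE.
Qed.

Lemma pol3_leg23_CG_R (w : 'I_n -> 'I_n -> 'I_n -> CC) x y z : y != P * z ->
  pol3 (apply3 (leg23 R) w) x y z = fleg23 cg (pol3 w) x y z.
Proof.
move=> yz; rewrite pol3_leg23 (pol1_ext _ (fun a => pol2_apply2_CG_R _ yz)) /pol1 -cg_op_sum.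
by apply: cg_op_eq.
Qed.

Lemma pol3_CG_R_YBE (w : 'I_n -> 'I_n -> 'I_n -> CC) x y z :
  x != P * y -> y != P * z -> x != P * (P * z) ->
  pol3 (apply3 (comp3 (leg12 R) (comp3 (leg13 R) (leg23 R))) w) x y z
  = pol3 (apply3 (comp3 (leg23 R) (comp3 (leg13 R) (leg12 R))) w) x y z.
Proof.
move=> xy yz xz.
(* Genericity conditions of the legs at the points where [cg_op] evaluates them. *)
have xPz : x / P != P * z by rewrite neq_divP.
have PyPz : P * y != P * (P * z) by rewrite (inj_eq (mulfI P_neq0)).
have Pyx : P * y != P * (x / P) by rewrite divPK eq_sym.
have xPy : x / P != P * (y / P) by rewrite divPK neq_divP.
have Pzy : P * z != P * (y / P) by rewrite divPK eq_sym.
transitivity (fleg12 cg (fleg13 cg (fleg23 cg (pol3 w))) x y z).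
  rewrite pol3_apply3_comp pol3_leg12_CG_R //; apply: cg_op_eq => /=;
    rewrite pol3_apply3_comp pol3_leg13_CG_R //; apply: cg_op_eq => /=;
    by rewrite pol3_leg23_CG_R.
rewrite cg_op_braid //.
rewrite pol3_apply3_comp pol3_leg23_CG_R //; apply: cg_op_eq => /=;
  rewrite pol3_apply3_comp pol3_leg13_CG_R //; apply: cg_op_eq => /=;
  by rewrite pol3_leg12_CG_R.
Qed.

Lemma pol2_apply2_CG_Rcheck (w : 'I_n -> 'I_n -> CC) x y : x != P * y ->
  pol2 (apply2 (CG_Rcheck q p) w) x y = cg_check q p (pol2 w) x y.
Proof.
move=> xy; rewrite (pol2_ext _ _ (apply2_scale2 _ _ _)) pol2Z pol2_apply2_comp.
rewrite pol2_apply2_CG_R //; congr (_ * _); apply: cg_op_eq;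
  by rewrite -pol2_swap; apply: pol2_ext => k l; rewrite apply2_flip.
Qed.

Lemma pol2_CG_Rcheck_hecke (w : 'I_n -> 'I_n -> CC) x y : x != P * y ->
  pol2 (apply2 (comp2 (add2 (CG_Rcheck q p) (scale2 (- q) (@id2 n)))
                      (add2 (CG_Rcheck q p) (scale2 q^-1 (@id2 n)))) w) x y = 0.
Proof.
move=> xy; have Pyx : P * y != P * (x / P) by rewrite divPK eq_sym.
rewrite pol2_apply2_comp; set v := apply2 _ w.
pose g u u' := cg_check q p (pol2 w) u u' + q^-1 * pol2 w u u'.
have vE u u' : u != P * u' -> pol2 v u u' = g u u'.
  by move=> uu'; rewrite /v pol2_apply2_addZid2 pol2_apply2_CG_Rcheck.
rewrite pol2_apply2_addZid2 pol2_apply2_CG_Rcheck // vE //.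
have -> : cg_check q p (pol2 v) x y = cg_check q p g x y by apply: cg_check_eq; rewrite vE.
by rewrite /g cg_check_hecke //; ring.
Qed.

End CremmerGervaisMatrix.

Theorem mainTheorem7 (n : nat) (q p : CC) (hn : (1 <= n)%N)
    (hq : q != 0) (hp : p != 0) :
  (forall a b c a' b' c' : 'I_n,
     comp3 (leg12 (CG_R q p)) (comp3 (leg13 (CG_R q p)) (leg23 (CG_R q p)))
       a b c a' b' c'
     = comp3 (leg23 (CG_R q p)) (comp3 (leg13 (CG_R q p)) (leg12 (CG_R q p)))
       a b c a' b' c')
  /\
  (forall i j k l : 'I_n,
     comp2 (add2 (CG_Rcheck q p) (scale2 (- q) (@id2 n)))
           (add2 (CG_Rcheck q p) (scale2 q^-1 (@id2 n))) i j k l = 0).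
Proof.
split.
  apply: (op3_eq_from_pol3 (B2 := fun z => [:: p ^+ 2 * z])
                           (B1 := fun y z => [:: p ^+ 2 * y; p ^+ 2 * (p ^+ 2 * z)])).
  move=> w z y x; rewrite !inE negb_or => yz /andP[xy xz].
  exact: pol3_CG_R_YBE.
apply: (op2_eq0_from_pol2 (B := fun y => [:: p ^+ 2 * y])) => w y x.
rewrite inE; exact: pol2_CG_Rcheck_hecke.
Qed.
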